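(* For each $n\ge1$, the natural truncation map $\pi_n:\mathfrak{krv}^{(n+1)}\to\mathfrak{krv}^{(n)}$ is a surjective Lie algebra homomorphism.
   Context: Let $\mathbb{L}$ be the degree completion of the free Lie algebra over $\mathbb{C}$ on $x,y$ (degree = number of letters), $\mathsf{A}$ the degree-completed free associative algebra on $x,y$, $\mathrm{cyc}=\mathsf{A}/[\mathsf{A},\mathsf{A}]$ (quotient by the span of $ab-ba$) with quotient map $\mathrm{tr}$. For $n\ge1$, $\mathbb{L}_{\le n}$, $\mathsf{A}_{\le n}$, $\mathrm{cyc}_{\le n}$ denote quotients by elements of degree $\ge n+1$. $\mathfrak{tder}_{\le n}$ is the Lie algebra (under commutator) of tangential derivations of $\mathbb{L}_{\le n}$: Lie derivations $u$ with $u(x)=[x,u_1]$, $u(y)=[y,u_2]$ for some $u_1,u_2\in\mathbb{L}_{\le n}$, written $u=(u_1,u_2)$. Writing $a=a_0+\partial_x(a)x+\partial_y(a)y$ uniquely, the divergence is $j(u)=\mathrm{tr}(\partial_x(u_1)x+\partial_y(u_2)y)\in\mathrm{cyc}_{\le n}$. The projections $\pi_n:\mathfrak{tder}_{\le n+1}\to\mathfrak{tder}_{\le n}$ are induced by $\mathbb{L}_{\le n+1}\to\mathbb{L}_{\le n}$. $\mathfrak{krv}^{(n)}$ is the Lie subalgebra of $u\in\mathfrak{tder}_{\le n}$ for which $u(x+y)=0$ in $\mathbb{L}_{\le n}$ and there exists $r\in\mathbb{C}[[z]]/z^{n+1}$ with $j(u)=\mathrm{tr}(r(x+y)-r(x)-r(y))$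 in $\mathrm{cyc}_{\le n}$. *)

From mathcomp Require Import all_boot all_algebra.
From mathcomp Require Import complex.
From mathcomp Require Import Rstruct.
Set Implicit Arguments. Unset Strict Implicit. Unset Printing Implicit Defensive.
Import GRing.Theory.
Local Open Scope ring_scope.

Definition C : fieldType := Rdefinitions.R[i].

Section Defs.
Variable F : fieldType.

(* Words in the letters x (= false) and y (= true); the degree of a word is its
   length.  The degree completion A of the free associative algebra on x,y is
   the algebra of noncommutative formal power series, i.e. arbitrary
   coefficient functions on words. *)
Definition word := seq bool.
Definition ser := word -> F.

Definition szero : ser := fun _ => 0.
Definition sadd (a b : ser) : ser := fun w => a w + b w.
Definition sopp (a : ser) : ser := fun w => - a w.
Definition ssub (a b : ser) : ser := fun w => a w - b w.
Definition sscale (c : F) (a : ser) : ser := fun w => c * a w.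
Definition smul (a b : ser) : ser :=
  fun w => \sum_(i < (size w).+1) a (take i w) * b (drop i w).
Definition sbr (a b : ser) : ser := ssub (smul a b) (smul b a).

Definition sX : ser := fun w => if w == [:: false] then 1 else 0.
Definition sY : ser := fun w => if w == [:: true] then 1 else 0.

Definition hcomp (d : nat) (a : ser) : ser :=
  fun w => if size w == d then a w else 0.

(* Equality in the truncation A_{<= n} (quotient by degree >= n+1). *)
Definition eqn (n : nat) (a b : ser) : Prop :=
  forall w : word, (size w <= n)%N -> a w = b w.

(* Lie polynomials: the (non-completed) free Lie algebra on x,y inside A,
   i.e. the smallest subspace containing x, y and closed under brackets. *)
Inductive liepoly : ser -> Prop :=
| lp_x : liepoly sX
| lp_y : liepoly sY
| lp_zero : liepoly szero
| lp_add a b : liepoly a -> liepoly b -> liepoly (sadd a b)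
| lp_scale c a : liepoly a -> liepoly (sscale c a)
| lp_br a b : liepoly a -> liepoly b -> liepoly (sbr a b)
| lp_ext a b : (forall w, a w = b w) -> liepoly a -> liepoly b.

(* The degree completion L of the free Lie algebra, as a subset of A:
   series all of whose homogeneous components are Lie polynomials.
   Elements of L_{<= n} are represented by elements of L, equality being eqn n. *)
Definition isLie (a : ser) : Prop := forall d : nat, liepoly (hcomp d a).

(* A pair u = (u1,u2) of Lie series determines the
   continuous derivation of A (restricting to a Lie derivation of L, and
   inducing one of each L_{<= n}) with x |-> [x,u1], y |-> [y,u2]. *)
Definition tpair := (ser * ser)%type.
Definition is_tder (u : tpair) : Prop := isLie u.1 /\ isLie u.2.

Definition gen_img (u : tpair) (l : bool) : ser :=
  if l then sbr sY u.2 else sbr sX u.1.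

(* Derivation on words: D(l_1...l_k) = sum_i l_1..l_{i-1} D(l_i) l_{i+1}..l_k;
   coefficient of w in D(a) = sum over w = p q s and letters l of
   a(p l s) * D(l)(q). *)
Definition act (u : tpair) (a : ser) : ser :=
  fun w => \sum_(i < (size w).+1) \sum_(j < (size w).+1 | (i <= j)%N)
             \sum_(l : bool)
               a (take i w ++ l :: drop j w) * gen_img u l (drop i (take j w)).

Definition der_eq (n : nat) (u v : tpair) : Prop :=
  forall a, isLie a -> eqn n (act u a) (act v a).

(* w represents the commutator [D_u, D_v] as a derivation of L_{<= n}. *)
Definition is_tbracket (n : nat) (u v w : tpair) : Prop :=
  forall a, isLie a -> eqn n (act w a) (ssub (act u (act v a)) (act v (act u a))).

(* w represents the linear combination c D_u + D_v as a derivation of L_{<= n}. *)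
Definition is_tlincomb (n : nat) (c : F) (u v w : tpair) : Prop :=
  forall a, isLie a -> eqn n (act w a) (sadd (sscale c (act u a)) (act v a)).

(* Partial derivatives: a = a_0 + dx(a) x + dy(a) y. *)
Definition dx (a : ser) : ser := fun w => a (rcons w false).
Definition dy (a : ser) : ser := fun w => a (rcons w true).

(* Equality in cyc_{<= n} = A_{<= n} / [A_{<= n}, A_{<= n}]:
   tr a = tr b iff a - b is a finite sum of commutators modulo degree >= n+1. *)
Definition cyc_eq (n : nat) (a b : ser) : Prop :=
  exists s : seq (ser * ser),
    forall w : word, (size w <= n)%N ->
      a w - b w = \sum_(pq <- s) (smul pq.1 pq.2 w - smul pq.2 pq.1 w).

(* The divergence (lifted to A; j(u) = tr (jdiv u)). *)
Definition jdiv (u : tpair) : ser := sadd (smul (dx u.1) sX) (smul (dy u.2) sY).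

(* For r = sum_k r_k z^k: r(x+y), r(x), r(y) as series. *)
Definition r_xy (r : nat -> F) : ser := fun w => r (size w).
Definition r_x (r : nat -> F) : ser := fun w => if all (fun b => ~~ b) w then r (size w) else 0.
Definition r_y (r : nat -> F) : ser := fun w => if all (fun b => b) w then r (size w) else 0.
Definition rform (r : nat -> F) : ser := ssub (ssub (r_xy r) (r_x r)) (r_y r).

(* KRV condition on a representing pair (r in C[[z]]/z^{n+1}: only r_0..r_n
   matter for cyc_eq n). *)
Definition krv_pair (n : nat) (u : tpair) : Prop :=
  [/\ is_tder u,
      eqn n (act u (sadd sX sY)) szero
    & exists r : nat -> F, cyc_eq n (jdiv u) (rform r)].

(* u (a tangential derivation of L_{<= n}, given by some pair) lies in krv^(n). *)
Definition in_krv (n : nat) (u : tpair) : Prop :=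
  is_tder u /\ exists u' : tpair, krv_pair n u' /\ der_eq n u' u.

End Defs.

(* Every condition defining krv^(n) is checked word by word on words of length
   at most n, so truncation from n+1 to n preserves derivation equality, linear
   combinations, brackets and membership in krv.  For surjectivity, represent
   u in krv^(n) by a pair and cut both components at degree n-1.  Since [x, u1]
   and [y, u2] raise degrees by one, the cut pair induces the same derivation of
   L_{<= n}, and it sends x + y to a series with no component of degree n+1.
   Its divergence is the degree <= n-1 truncation of j(u), which is again of the
   form tr(r(x+y) - r(x) - r(y)) after truncating r, because the truncation of a
   commutator is a sum of commutators of homogeneous components. *)
From Pilot Require Import Defs.
From mathcomp Require Import all_boot all_algebra.
From mathcomp Require Import zify.
Set Implicit Arguments. Unset Strict Implicit. Unset Printing Implicit Defensive.
Import GRing.Theory.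
Local Open Scope ring_scope.

Section Truncation.
Variable F : fieldType.
Implicit Types (a b g p q : ser F) (u v : tpair F) (w : word).

Definition strunc (m : nat) a : ser F := fun w => if (size w <= m)%N then a w else 0.
Definition ttrunc (m : nat) u : tpair F := (strunc m u.1, strunc m u.2).
Definition rtrunc (m : nat) (r : nat -> F) : nat -> F :=
  fun k => if (k <= m)%N then r k else 0.

Definition deg1_supported a := forall w, size w != 1%N -> a w = 0.

Lemma sX_deg1 : deg1_supported (sX F).
Proof. by move=> w; rewrite /sX; case: (w =P _) => [->|]. Qed.

Lemma sY_deg1 : deg1_supported (sY F).
Proof. by move=> w; rewrite /sY; case: (w =P _) => [->|]. Qed.

Lemma smul_deg1_strunc g a m w : deg1_supported g ->
  smul g (strunc m a) w = if (size w <= m.+1)%N then smul g a w else 0.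
Proof.
move=> g1; rewrite /smul; case: ifP => hw; [apply: eq_bigr | apply: big1];
  move=> [k hk] _ /=; rewrite /strunc;
  (case: (eqVneq (size (take k w)) 1%N) => h1; last by rewrite g1 ?mul0r);
  move/(congr1 size): (cat_take_drop k w); rewrite size_cat h1 => e.
- by rewrite ifT //; lia.
- by rewrite ifF ?mulr0 //; lia.
Qed.

Lemma smul_strunc_deg1 g a m w : deg1_supported g ->
  smul (strunc m a) g w = if (size w <= m.+1)%N then smul a g w else 0.
Proof.
move=> g1; rewrite /smul; case: ifP => hw; [apply: eq_bigr | apply: big1];
  move=> [k hk] _ /=; rewrite /strunc;
  (case: (eqVneq (size (drop k w)) 1%N) => h1; last by rewrite g1 ?mulr0);
  move/(congr1 size): (cat_take_drop k w); rewrite size_cat h1 => e.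
- by rewrite ifT //; lia.
- by rewrite ifF ?mul0r //; lia.
Qed.

Lemma gen_img_ttrunc m u l w :
  gen_img (ttrunc m u) l w = if (size w <= m.+1)%N then gen_img u l w else 0.
Proof.
have [dX dY] := (sX_deg1, sY_deg1).
rewrite /gen_img /sbr /ssub; case: l;
  by rewrite /= smul_deg1_strunc // smul_strunc_deg1 //; case: ifP; rewrite ?subr0.
Qed.

Lemma act_ttrunc m u a w : (size w <= m.+1)%N -> act (ttrunc m u) a w = act u a w.
Proof.
move=> hw; apply: eq_bigr => i _; apply: eq_bigr => j _; apply: eq_bigr => l _.
rewrite gen_img_ttrunc ifT // size_drop size_take.
by case: ifP => _; have := ltn_ord j; lia.
Qed.

Lemma act_deg1 u a w : deg1_supported a ->
  act u a w = \sum_(l : bool) a [:: l] * gen_img u l w.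
Proof.
move=> a1; rewrite /act (bigD1 ord0) //= [X in _ + X]big1 ?addr0; last first.
  move=> [i hi] ni0; have {ni0} i0 : i != 0%N.
    by apply: contraNneq ni0 => i0; rewrite -val_eqE /= i0.
  apply: big1 => j _; apply: big1 => l _.
  by rewrite a1 ?mul0r // size_cat size_take /=; case: ifP; lia.
rewrite (bigD1 ord_max) //= [X in _ + X]big1 ?addr0.
  by rewrite take0 drop0 drop_size take_size.
move=> [j hj] nj; have {nj} jw : j != size w.
  by apply: contraNneq nj => jw; rewrite -val_eqE /= jw.
by apply: big1 => l _; rewrite a1 ?mul0r // take0 /= size_drop; lia.
Qed.

Lemma act_ttrunc_xy m u w : size w = m.+2 ->
  act (ttrunc m u) (sadd (sX F) (sY F)) w = 0.
Proof.
move=> hw; rewrite act_deg1 => [|v hv]; last by rewrite /sadd sX_deg1 ?sY_deg1 ?addr0.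
by apply: big1 => l _; rewrite gen_img_ttrunc hw ltnn mulr0.
Qed.

(* [\sum_k sX F (drop k w)] is 1 if [w] ends with x and 0 otherwise. *)
Lemma jdivE u w :
  jdiv u w = u.1 w * (\sum_(k < (size w).+1) sX F (drop k w))
           + u.2 w * (\sum_(k < (size w).+1) sY F (drop k w)).
Proof.
rewrite /jdiv /sadd /smul /dx /dy; congr (_ + _); rewrite big_distrr;
  apply: eq_bigr => [[k hk]] _ /=; rewrite /sX /sY;
  (case: eqP => e; last by rewrite !mulr0);
  by rewrite -cats1 -e cat_take_drop.
Qed.

Lemma jdiv_ttrunc m u w : jdiv (ttrunc m u) w = strunc m (jdiv u) w.
Proof. by rewrite /strunc !jdivE /= /strunc; case: ifP; rewrite // !mul0r addr0. Qed.

Lemma rform_rtrunc m r w : rform (rtrunc m r) w = strunc m (rform r) w.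
Proof.
rewrite /rform /ssub /r_xy /r_x /r_y /strunc /rtrunc.
by case: ifP => // _; case: all; case: all; rewrite ?subr0.
Qed.

Lemma smul_hcomp i j p q w :
  smul (hcomp i p) (hcomp j q) w =
  if (i + j == size w)%N then p (take i w) * q (drop i w) else 0.
Proof.
rewrite /smul /hcomp; case: ifP => /eqP e; last first.
  apply: big1 => k _; rewrite size_takel; last by have := ltn_ord k; lia.
  rewrite size_drop; case: eqP => ek; last by rewrite mul0r.
  by rewrite ifF ?mulr0 //; apply/eqP; have := ltn_ord k; lia.
have hi : (i < (size w).+1)%N by lia.
rewrite (bigD1 (Ordinal hi)) //= big1 ?addr0 => [|k /eqP nk].
  by rewrite size_takel ?eqxx ?size_drop ?ifT //; apply/eqP; lia.
rewrite size_takel; last by have := ltn_ord k; lia.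
by rewrite ifF ?mul0r //; apply/eqP => ek; apply: nk; apply: val_inj => /=; lia.
Qed.

Lemma strunc_smul m p q w :
  strunc m (smul p q) w =
  \sum_(0 <= d < m.+1) \sum_(0 <= i < d.+1) smul (hcomp i p) (hcomp (d - i) q) w.
Proof.
transitivity (\sum_(0 <= d < m.+1) if d == size w then
     \sum_(0 <= i < d.+1) p (take i w) * q (drop i w) else 0).
  by rewrite -big_mkcond /= big_nat1_eq /strunc /smul big_mkord; case: ifP.
apply: eq_big_nat => d hd; case: eqP => e.
  by apply: eq_big_nat => i hi; rewrite smul_hcomp ifT //; apply/eqP; lia.
rewrite big1_seq // => i /andP [_]; rewrite mem_index_iota => hi.
by rewrite smul_hcomp ifF //; apply/eqP; lia.
Qed.

Definition hcomp_pairs (m : nat) p q : seq (ser F * ser F) :=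
  flatten [seq [seq (hcomp i p, hcomp (d - i) q) | i <- index_iota 0 d.+1]
          | d <- index_iota 0 m.+1].

(* Reversing the inner sum pairs the (i, d-i) term of pq with the (d-i, i)
   term of qp. *)
Lemma strunc_commE m p q w :
  strunc m (smul p q) w - strunc m (smul q p) w =
  \sum_(pq <- hcomp_pairs m p q) (smul pq.1 pq.2 w - smul pq.2 pq.1 w).
Proof.
rewrite big_flatten big_map !strunc_smul -sumrB; apply: eq_bigr => d _.
rewrite big_map !sumrB; congr (_ - _); rewrite [LHS]big_nat_rev.
apply: eq_big_nat => i hi /=; rewrite add0n subSS.
by have -> : (d - (d - i) = i)%N by lia.
Qed.

Lemma cyc_eq_strunc n m k a b : (m <= n)%N ->
  cyc_eq n a b -> cyc_eq k (strunc m a) (strunc m b).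
Proof.
move=> mn [s hs]; exists (flatten [seq hcomp_pairs m pq.1 pq.2 | pq <- s]) => w _.
rewrite big_flatten big_map; under eq_bigr do rewrite -strunc_commE.
rewrite /strunc; case: ifP => hw; first by rewrite hs //; apply: leq_trans mn.
by rewrite subrr big1 // => pq _; rewrite subrr.
Qed.

Lemma isLie_strunc m a : isLie a -> isLie (strunc m a).
Proof.
move=> la d; have [dm | md] := leqP d m.
  by apply: lp_ext (la d) => w; rewrite /hcomp /strunc; case: eqP => // ->; rewrite dm.
apply: lp_ext (lp_zero F) => w; rewrite /hcomp /strunc /szero.
by case: eqP => // ->; rewrite leqNgt md.
Qed.

Lemma eqnS n a b : Defs.eqn n.+1 a b -> Defs.eqn n a b.
Proof. by move=> h w hw; apply/h/leqW. Qed.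

Lemma cyc_eqS n a b : cyc_eq n.+1 a b -> cyc_eq n a b.
Proof. by move=> [s hs]; exists s => w hw; apply/hs/leqW. Qed.

Lemma der_eqS n u v : der_eq n.+1 u v -> der_eq n u v.
Proof. by move=> h a la; apply/eqnS/h. Qed.

Lemma krv_pairS n u : krv_pair n.+1 u -> krv_pair n u.
Proof. by case=> tu hxy [r hr]; split => //; [apply: eqnS | exists r; apply: cyc_eqS]. Qed.

Lemma in_krvS n u : in_krv n.+1 u -> in_krv n u.
Proof.
by case=> tu [u' [ku du]]; split => //; exists u'; split; [apply: krv_pairS | apply: der_eqS].
Qed.

Lemma krv_pair_ttrunc m u : krv_pair m.+1 u -> krv_pair m.+2 (ttrunc m u).
Proof.
case=> [[l1 l2]] hxy [r hr]; split.
- by split; apply: isLie_strunc.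
- move=> w hw; have [lew | ltw] := leqP (size w) m.+1.
    by rewrite act_ttrunc // hxy.
  by apply: act_ttrunc_xy; lia.
- exists (rtrunc m r); have [s hs] := cyc_eq_strunc m.+2 (leqnSn m) hr.
  by exists s => w hw; rewrite jdiv_ttrunc rform_rtrunc hs.
Qed.

Lemma in_krv_ttrunc m u : krv_pair m.+1 u -> in_krv m.+2 (ttrunc m u).
Proof.
move=> ku; have kt := krv_pair_ttrunc ku.
by split; [case: kt | exists (ttrunc m u); split => // a _ w _].
Qed.

End Truncation.

Theorem lemma3p12 (n : nat) : (1 <= n)%N ->
  [/\ (* pi_n is well defined on derivations *)
      (forall u v : tpair C, is_tder u -> is_tder v ->
         der_eq n.+1 u v -> der_eq n u v),
      (* pi_n maps krv^(n+1) into krv^(n) *)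
      (forall u : tpair C, in_krv n.+1 u -> in_krv n u),
      (* pi_n is linear *)
      (forall (c : C) (u v w : tpair C), in_krv n.+1 u -> in_krv n.+1 v ->
         in_krv n.+1 w -> is_tlincomb n.+1 c u v w -> is_tlincomb n c u v w),
      (* pi_n preserves the bracket *)
      (forall u v w : tpair C, in_krv n.+1 u -> in_krv n.+1 v ->
         in_krv n.+1 w -> is_tbracket n.+1 u v w -> is_tbracket n u v w)
    & (* pi_n is surjective *)
      (forall u : tpair C, in_krv n u ->
         exists v : tpair C, in_krv n.+1 v /\ der_eq n v u)].
Proof.
case: n => [//|m] _; split.
- by move=> u v _ _; apply: der_eqS.
- exact: in_krvS.
- by move=> c u v w _ _ _ h a la; apply/eqnS/h.
- by move=> u v w _ _ _ h a la; apply/eqnS/h.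
- move=> u [_ [u' [ku du]]]; exists (ttrunc m u'); split; first exact: in_krv_ttrunc.
  by move=> a la w hw; rewrite act_ttrunc //; apply: du.
Qed.
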